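(* Let $n\ge0$ and $\kappa\ge0$, and suppose the arc travel times are $t_a(v_a)=b_a(v_a)^n$ with $b_a>0$ for each $a\in\mathcal A$. Let $\bar{\mathbf v}\in\mathbf V$ satisfy $$\sum_{a\in\mathcal A}\lambda_at_a(\bar v_a)(v_a-\bar v_a)\ge0\qquad\text{for all }\mathbf v\in\mathbf V$$ for some constants $\lambda_a\in[\tfrac1{1+\kappa},1]$, and let $\bar{\mathbf f}\in\mathbf F$ be any path flow inducing $\bar{\mathbf v}$. Let $\hat{\mathbf f}^0\in\mathbf F_{1+\kappa}$ be a PRUE flow for the demands $(1+\kappa)Q_w$ and $\mathbf f^0\in\mathbf F$ a PRUE flow for the demands $Q_w$. Then $C(\bar{\mathbf f})\le C(\hat{\mathbf f}^0)$, and consequently $C(\bar{\mathbf f})\le(1+\kappa)^{n+1}C(\mathbf f^0)$.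
   Context: Let $G=(\mathcal N,\mathcal A)$ be a finite directed graph and $\mathcal W$ a finite set of OD pairs; each $w$ has demand $Q_w>0$ and a finite set $\mathcal P_w$ of paths from its origin to its destination; $\mathcal P=\bigcup_w\mathcal P_w$; $\delta^p_a=1$ if arc $a$ lies on path $p$, else $0$. $\mathbf F=\{\mathbf f\ge0:\sum_{p\in\mathcal P_w}f_p=Q_w\ \forall w\}$ and $\mathbf F_{1+\kappa}=\{(1+\kappa)\mathbf f:\mathbf f\in\mathbf F\}$ (the feasible flows when every demand is multiplied by $1+\kappa$). A path flow induces arc flows $v_a=\sum_p\delta^p_af_p$; $\mathbf V$ is the set of arc flows induced by $\mathbf F$. Path travel time $c_p(\mathbf f)=\sum_a\delta^p_at_a(v_a)$; total system travel time $C(\mathbf f)=\sum_pc_p(\mathbf f)f_p=\sum_at_a(v_a)v_a$. A feasible flow (in $\mathbf F$ or $\mathbf F_{1+\kappa}$) is a PRUE if for all $w$ and $p\in\mathcal P_w$, $f_p>0\implies c_p(\mathbf f)=\min_{p'\in\mathcal P_w}c_{p'}(\mathbf f)$. *)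

From HB Require Import structures.
From mathcomp Require Import all_boot all_order all_algebra.
From mathcomp Require Import reals exp.
Set Implicit Arguments. Unset Strict Implicit. Unset Printing Implicit Defensive.
Import Order.TTheory GRing.Theory Num.Theory.
Local Open Scope ring_scope.

Section Traffic.
Variable R : realType.
Variables (N A : finType) (src tgt : A -> N).
Variables (W P : finType) (orig dest : W -> N) (od : P -> W) (route : P -> seq A).

Definition is_path (o d : N) (s : seq A) : bool :=
  if s is a :: s' then
    [&& src a == o, path (fun a1 a2 => tgt a1 == src a2) a s',
        tgt (last a s') == d & uniq (src a :: map tgt s)]
  else false.

Definition delta (p : P) (a : A) : R := (a \in route p)%:R.

Variable Q : W -> R.

Definition inF (f : P -> R) : Prop :=
  (forall p, 0 <= f p) /\ (forall w, \sum_(p | od p == w) f p = Q w).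

Definition inFk (kappa : R) (fh : P -> R) : Prop :=
  exists f, inF f /\ fh = (fun p => (1 + kappa) * f p).

Definition arcflow (f : P -> R) (a : A) : R := \sum_p delta p a * f p.

Definition inV (v : A -> R) : Prop := exists f, inF f /\ v = arcflow f.

Variable t : A -> R -> R.

Definition pathcost (f : P -> R) (p : P) : R :=
  \sum_a delta p a * t a (arcflow f a).

Definition TSTT (f : P -> R) : R := \sum_p pathcost f p * f p.

Definition PRUE (f : P -> R) : Prop :=
  forall p, 0 < f p -> forall p', od p' = od p -> pathcost f p <= pathcost f p'.

End Traffic.

Definition bpr (R : realType) (A : Type) (b : A -> R) (n : R) (a : A) (x : R) : R :=
  b a * powR x n.

(* By Young's inequality (n+1) x^n y <= n x^(n+1) + y^(n+1), a monomial
   variational inequality  sum_a w_a u_a^n (y_a - u_a) >= 0  with nonnegative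
   weights forces  sum_a w_a u_a^(n+1) <= sum_a w_a y_a^(n+1).
   With weights lambda_a b_a and y the arc flow of fhat0 / (1 + kappa) this gives
   C(fbar) <= C(fhat0): replacing lambda_a by 1 costs a factor at most 1 + kappa,
   which the homogeneity C((1 + kappa) f) = (1 + kappa)^(n+1) C(f) absorbs.
   With weights b_a, the Wardrop inequality satisfied by the PRUE flow fhat0
   against (1 + kappa) f0 gives C(fhat0) <= (1 + kappa)^(n+1) C(f0). *)
From HB Require Import structures.
From mathcomp Require Import all_boot all_order all_algebra.
From mathcomp Require Import boolp reals exp.
From mathcomp Require Import ring lra.
Import Order.TTheory GRing.Theory Num.Theory.
Set Implicit Arguments. Unset Strict Implicit. Unset Printing Implicit Defensive.
Local Open Scope ring_scope.

Section PathFlows.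
Variables (R : realType) (A P W : finType) (od : P -> W) (route : P -> seq A).
Variable t : A -> R -> R.

Lemma arcflow_ge0 (f : P -> R) : (forall p, 0 <= f p) -> forall a, 0 <= arcflow route f a.
Proof. by move=> f_ge0 a; apply: sumr_ge0 => p _; rewrite mulr_ge0 ?ler0n. Qed.

Lemma arcflowZ (c : R) (f : P -> R) :
  arcflow route (fun p => c * f p) = fun a => c * arcflow route f a.
Proof. by apply/funext => a; rewrite /arcflow mulr_sumr; apply: eq_bigr => p _; ring. Qed.

Lemma sum_pathcost_arcflow (f g : P -> R) :
  \sum_p pathcost route t f p * g p =
  \sum_a t a (arcflow route f a) * arcflow route g a.
Proof.
rewrite /pathcost; under eq_bigr do rewrite mulr_suml.
rewrite exchange_big; apply: eq_bigr => a _.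
by rewrite /arcflow mulr_sumr; apply: eq_bigr => p _; ring.
Qed.

Lemma TSTT_arcflow (f : P -> R) :
  TSTT route t f = \sum_a t a (arcflow route f a) * arcflow route f a.
Proof. exact: sum_pathcost_arcflow. Qed.

(* On an OD pair w used by f, all used paths cost the minimum m_w, so f pays m_w
   times the demand, while g pays at least that; an OD pair unused by f has
   zero demand, so g does not use it either. *)
Lemma PRUE_sum_pathcost_le (f g : P -> R) :
  (forall p, 0 <= f p) -> (forall p, 0 <= g p) ->
  (forall w, \sum_(p | od p == w) f p = \sum_(p | od p == w) g p) ->
  PRUE od route t f ->
  \sum_p pathcost route t f p * f p <= \sum_p pathcost route t f p * g p.
Proof.
move=> f_ge0 g_ge0 same_demand ue.
rewrite (partition_big od predT) // [leRHS](partition_big od predT) //=.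
apply: ler_sum => w _.
case: (pickP (fun p => (od p == w) && (0 < f p))) => [p0 /andP[/eqP odp0 fp0] | unused].
  have min_p0 p : od p = w -> pathcost route t f p0 <= pathcost route t f p.
    by move=> odp; apply: ue; rewrite // odp odp0.
  have -> : \sum_(p | od p == w) pathcost route t f p * f p =
            \sum_(p | od p == w) pathcost route t f p0 * f p.
    apply: eq_bigr => p /eqP odp.
    have [fp_pos|] := boolP (0 < f p).
      by congr (_ * _); apply/eqP; rewrite eq_le min_p0 // ue // odp odp0.
    rewrite -leNgt => fp_le0.
    have -> : f p = 0 by apply/eqP; rewrite eq_le fp_le0 f_ge0.
    by rewrite !mulr0.
  rewrite -mulr_sumr same_demand mulr_sumr; apply: ler_sum => p /eqP odp.
  by rewrite ler_wpM2r ?min_p0.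
have f_w0 p : od p == w -> f p = 0.
  move=> odp; apply/eqP; rewrite eq_le f_ge0 andbT leNgt.
  by move: (unused p); rewrite odp => /negbT.
have g_w0 : forall p, od p == w -> g p = 0.
  apply: psumr_eq0P => [p _|]; first exact: g_ge0.
  by rewrite -same_demand big1.
by rewrite !big1 // => p odp; rewrite ?f_w0 ?g_w0 // mulr0.
Qed.

Lemma PRUE_arc_vi (f g : P -> R) :
  (forall p, 0 <= f p) -> (forall p, 0 <= g p) ->
  (forall w, \sum_(p | od p == w) f p = \sum_(p | od p == w) g p) ->
  PRUE od route t f ->
  0 <= \sum_a t a (arcflow route f a) * (arcflow route g a - arcflow route f a).
Proof.
move=> f_ge0 g_ge0 same_demand ue.
under eq_bigr do rewrite mulrBr.
rewrite sumrB -sum_pathcost_arcflow -TSTT_arcflow subr_ge0.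
exact: PRUE_sum_pathcost_le.
Qed.

End PathFlows.

Section MonomialCost.
Variables (R : realType) (A : finType) (n : R).
Hypothesis n_ge0 : 0 <= n.

Definition monomial_cost (w v : A -> R) : R := \sum_a w a * powR (v a) n * v a.

Lemma TSTT_bpr (P : finType) (route : P -> seq A) (b : A -> R) (f : P -> R) :
  TSTT route (bpr b n) f = monomial_cost b (arcflow route f).
Proof. exact: TSTT_arcflow. Qed.

Lemma young_powR (x y : R) : 0 <= x -> 0 <= y ->
  (n + 1) * (powR x n * y) <= n * (powR x n * x) + powR y n * y.
Proof.
move=> x_ge0 y_ge0.
have [->|n_neq0] := eqVneq n 0; first by rewrite !powRr0; lra.
have n_gt0 : 0 < n by rewrite lt_neqAle eq_sym n_neq0.
have n1_gt0 : 0 < n + 1 by lra.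
have conj_exps : ((n + 1) / n)^-1 + (n + 1)^-1 = 1.
  by field; rewrite ?gt_eqF.
have := conjugate_powR (powR_ge0 x n) y_ge0 (divr_gt0 n1_gt0 n_gt0) n1_gt0 conj_exps.
rewrite -powRrM.
have -> : n * ((n + 1) / n) = n + 1 by field; rewrite gt_eqF.
rewrite !powRD ?powRr1 ?(gt_eqF n1_gt0) // => young.
have -> : n * (powR x n * x) + powR y n * y =
          (n + 1) * (powR x n * x / ((n + 1) / n) + powR y n * y / (n + 1)).
  by field; rewrite ?gt_eqF.
by rewrite ler_pM2l.
Qed.

Lemma monomial_costZ (w : A -> R) (c : R) (u : A -> R) :
  0 <= c -> (forall a, 0 <= u a) ->
  monomial_cost w (fun a => c * u a) = powR c (n + 1) * monomial_cost w u.
Proof.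
move=> c_ge0 u_ge0; rewrite mulr_sumr; apply: eq_bigr => a _.
rewrite powRM // powRD ?powRr1 //; last by rewrite gt_eqF // ltr_pwDr.
ring.
Qed.

Lemma monomial_costMl (c : R) (w u : A -> R) :
  monomial_cost (fun a => c * w a) u = c * monomial_cost w u.
Proof. by rewrite mulr_sumr; apply: eq_bigr => a _; rewrite !mulrA. Qed.

Lemma monomial_cost_le_weights (w w' u : A -> R) :
  (forall a, w a <= w' a) -> (forall a, 0 <= u a) ->
  monomial_cost w u <= monomial_cost w' u.
Proof.
move=> le_w u_ge0; apply: ler_sum => a _.
by rewrite ler_wpM2r // ler_wpM2r ?powR_ge0.
Qed.

Lemma monomial_cost_le_of_vi (w u y : A -> R) :
  (forall a, 0 <= w a) -> (forall a, 0 <= u a) -> (forall a, 0 <= y a) ->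
  0 <= \sum_a w a * powR (u a) n * (y a - u a) ->
  monomial_cost w u <= monomial_cost w y.
Proof.
move=> w_ge0 u_ge0 y_ge0 vi.
set X := monomial_cost w u; set Z := monomial_cost w y.
set Y := \sum_a w a * powR (u a) n * y a.
have X_le_Y : X <= Y.
  by move: vi; under eq_bigr do rewrite mulrBr; rewrite sumrB subr_ge0.
have young_sum : (n + 1) * Y <= n * X + Z.
  rewrite /Y /X /Z /monomial_cost !mulr_sumr -big_split /=; apply: ler_sum => a _.
  have := ler_wpM2l (w_ge0 a) (young_powR (u_ge0 a) (y_ge0 a)).
  by rewrite mulrDr !mulrA [w a * n]mulrC [w a * (n + 1)]mulrC.
have : (n + 1) * X <= (n + 1) * Y by rewrite ler_wpM2l // addr_ge0.
lra.
Qed.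

Lemma monomial_cost_le_of_relaxed_vi (c : R) (lambda w u y : A -> R) :
  1 <= c -> (forall a, 1 / c <= lambda a <= 1) ->
  (forall a, 0 <= w a) -> (forall a, 0 <= u a) -> (forall a, 0 <= y a) ->
  0 <= \sum_a lambda a * (w a * powR (u a) n) * (y a - u a) ->
  monomial_cost w u <= monomial_cost w (fun a => c * y a).
Proof.
move=> c_ge1 lambda_bounds w_ge0 u_ge0 y_ge0 vi.
have c_gt0 : 0 < c by apply: lt_le_trans c_ge1.
have lambda_ge0 a : 0 <= lambda a.
  by apply: le_trans (proj1 (andP (lambda_bounds a))); rewrite divr_ge0 ?ltW.
have w_le_clw a : w a <= c * (lambda a * w a).
  rewrite mulrA ler_peMl //; case/andP: (lambda_bounds a) => + _.
  by rewrite div1r -[_^-1]mulr1 ler_pdivrMl.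
have clw_le_cw a : c * (lambda a * w a) <= c * w a.
  by rewrite ler_pM2l // ler_piMl //; case/andP: (lambda_bounds a).
have vi_lw : monomial_cost (fun a => lambda a * w a) u <=
             monomial_cost (fun a => lambda a * w a) y.
  apply: monomial_cost_le_of_vi => // [a|]; first by rewrite mulr_ge0.
  by move: vi; under eq_bigr do rewrite mulrA.
have c_le_powc : c <= powR c (n + 1).
  have one_le : 1 <= n + 1 by rewrite lerDr.
  by rewrite -[leLHS](powRr1 (ltW c_gt0)) (ler_powR c_ge1 one_le).
(* C_w(u) <= c C_(lambda w)(u) <= c C_(lambda w)(y) <= c C_w(y) <= c^(n+1) C_w(y) *)
rewrite (monomial_costZ _ (ltW c_gt0) y_ge0).
apply: le_trans (monomial_cost_le_weights w_le_clw u_ge0) _.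
rewrite monomial_costMl.
apply: le_trans (ler_wpM2l (ltW c_gt0) vi_lw) _.
rewrite -[leLHS]monomial_costMl.
apply: le_trans (monomial_cost_le_weights clw_le_cw y_ge0) _.
rewrite monomial_costMl ler_wpM2r //.
by apply: sumr_ge0 => a _; rewrite !mulr_ge0 ?powR_ge0.
Qed.

End MonomialCost.

Theorem theorem1 (R : realType) (N A : finType) (src tgt : A -> N)
  (W P : finType) (orig dest : W -> N) (od : P -> W) (route : P -> seq A)
  (Q : W -> R) (b : A -> R) (n kappa : R) (lambda : A -> R)
  (vbar : A -> R) (fbar fhat0 f0 : P -> R) :
  (forall p, is_path src tgt (orig (od p)) (dest (od p)) (route p)) ->
  (forall w, 0 < Q w) ->
  0 <= n -> 0 <= kappa ->
  (forall a, 0 < b a) ->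
  (forall a, 1 / (1 + kappa) <= lambda a <= 1) ->
  inV od route Q vbar ->
  (forall v, inV od route Q v ->
     0 <= \sum_a lambda a * bpr b n a (vbar a) * (v a - vbar a)) ->
  inF od Q fbar -> arcflow route fbar = vbar ->
  inFk od Q kappa fhat0 -> PRUE od route (bpr b n) fhat0 ->
  inF od Q f0 -> PRUE od route (bpr b n) f0 ->
  TSTT route (bpr b n) fbar <= TSTT route (bpr b n) fhat0 /\
  TSTT route (bpr b n) fbar <= powR (1 + kappa) (n + 1) * TSTT route (bpr b n) f0.
Proof.
move=> _ _ n_ge0 kappa_ge0 b_gt0 lambda_bounds _ vi [fbar_ge0 _] fbar_vbar
  [g [[g_ge0 g_demand] ->]] ue_hat [f0_ge0 f0_demand] _.
subst vbar.
have c_ge1 : 1 <= 1 + kappa by rewrite lerDl.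
have c_ge0 : 0 <= 1 + kappa := le_trans ler01 c_ge1.
have b_ge0 a : 0 <= b a := ltW (b_gt0 a).
have scaled_ge0 (f : P -> R) : (forall p, 0 <= f p) -> forall p, 0 <= (1 + kappa) * f p.
  by move=> f_ge0 p; rewrite mulr_ge0.
have fbar_le_hat : TSTT route (bpr b n) fbar <=
                   TSTT route (bpr b n) (fun p => (1 + kappa) * g p).
  rewrite !TSTT_bpr arcflowZ.
  apply: (monomial_cost_le_of_relaxed_vi n_ge0 c_ge1 lambda_bounds b_ge0
            (arcflow_ge0 route fbar_ge0) (arcflow_ge0 route g_ge0)).
  by apply: vi; exists g; do ! split.
split=> //; apply: le_trans fbar_le_hat _.
have hat_ge0 := scaled_ge0 _ g_ge0.
have f0_scaled_ge0 := scaled_ge0 _ f0_ge0.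
rewrite !TSTT_bpr -(monomial_costZ n_ge0 _ c_ge0 (arcflow_ge0 route f0_ge0)) -arcflowZ.
apply: (monomial_cost_le_of_vi n_ge0 b_ge0 (arcflow_ge0 route hat_ge0)
          (arcflow_ge0 route f0_scaled_ge0)).
apply: PRUE_arc_vi hat_ge0 f0_scaled_ge0 _ ue_hat => w.
by rewrite -!mulr_sumr g_demand f0_demand.
Qed.
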